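(* Let $R$ be a ring and $\mathfrak a\in\mathrm{Ass}(R)$. Then: (1) $\mathrm{Den}(R,\mathfrak a)$ is an ordered abelian semigroup under $S_1S_2:=\langle S_1,S_2\rangle$ (the multiplicative subsemigroup of $R$ generated by $S_1,S_2$): for $S_1,S_2,S_3\in\mathrm{Den}(R,\mathfrak a)$, $S_1S_2\in\mathrm{Den}(R,\mathfrak a)$, $S_1S_2=S_2S_1$, and $S_1\subseteq S_2$ implies $S_1S_3\subseteq S_2S_3$; (2) $S_{\mathfrak a}(R):=\bigcup_{S\in\mathrm{Den}(R,\mathfrak a)}S$ belongs to $\mathrm{Den}(R,\mathfrak a)$ and is its largest element; (3) for any non-empty family $S_i\in\mathrm{Den}(R,\mathfrak a)$, $i\in I$, the set $\langle S_i\mid i\in I\rangle:=\bigcup_{\emptyset\ne J\subseteq I,|J|<\infty}\prod_{j\in J}S_j$ belongs to $\mathrm{Den}(R,\mathfrak a)$ and is the least upper bound of $\{S_i\}_{i\in I}$ in $\mathrm{Den}(R,\mathfrak a)$.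
   Context: Rings are associative with $1$. A multiplicatively closed subset $S$ ($1\in S$, $0\notin S$) is a left (resp. right) Ore set if $Sr\cap Rs\neq\emptyset$ (resp. $rS\cap sR\neq\emptyset$) for all $r\in R,s\in S$. A left denominator set is a left Ore set $S$ such that $rs=0$ ($s\in S$) implies $tr=0$ for some $t\in S$; a right denominator set is defined symmetrically. $\mathrm{Den}(R)$ is the set of subsets that are both left and right denominator sets; for $S\in\mathrm{Den}(R)$, $\mathrm{ass}(S):=\{r\mid sr=0\text{ for some }s\in S\}=\{r\mid rs=0\text{ for some }s\in S\}$. $\mathrm{Ass}(R):=\{\mathrm{ass}(S)\mid S\in\mathrm{Den}(R)\}$ and $\mathrm{Den}(R,\mathfrak a):=\{S\in\mathrm{Den}(R)\mid\mathrm{ass}(S)=\mathfrak a\}$. *)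

From mathcomp Require Import all_boot all_algebra.
Set Implicit Arguments. Unset Strict Implicit. Unset Printing Implicit Defensive.
Import GRing.Theory.
Local Open Scope ring_scope.

Definition rset (R : Type) := R -> Prop.

Definition subset_of (R : Type) (A B : rset R) : Prop := forall x, A x -> B x.
Definition seteq (R : Type) (A B : rset R) : Prop := forall x, A x <-> B x.

Section Den.
Variable R : pzRingType.

Definition mult_closed (S : rset R) : Prop :=
  [/\ S 1, ~ S 0 & forall x y, S x -> S y -> S (x * y)].

Definition left_ore (S : rset R) : Prop :=
  mult_closed S /\
  forall r s, S s -> exists s' r', S s' /\ s' * r = r' * s.

Definition right_ore (S : rset R) : Prop :=
  mult_closed S /\
  forall r s, S s -> exists s' r', S s' /\ r * s' = s * r'.

Definition left_den (S : rset R) : Prop :=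
  left_ore S /\ forall r s, S s -> r * s = 0 -> exists t, S t /\ t * r = 0.

Definition right_den (S : rset R) : Prop :=
  right_ore S /\ forall r s, S s -> s * r = 0 -> exists t, S t /\ r * t = 0.

Definition Den (S : rset R) : Prop := left_den S /\ right_den S.

Definition ass (S : rset R) : rset R := fun r => exists s, S s /\ s * r = 0.

Definition in_Ass (a : rset R) : Prop := exists S, Den S /\ seteq (ass S) a.

Definition Den_a (a : rset R) (S : rset R) : Prop := Den S /\ seteq (ass S) a.

Inductive gen (T : rset R) : R -> Prop :=
| gen_base x : T x -> gen T x
| gen_mul x y : gen T x -> gen T y -> gen T (x * y).

Definition prodDen (S1 S2 : rset R) : rset R := gen (fun x => S1 x \/ S2 x).

Definition genFam (I : Type) (Sf : I -> rset R) : rset R :=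
  gen (fun x => exists i, Sf i x).

Definition S_a (a : rset R) : rset R := fun x => exists S, Den_a a S /\ S x.

End Den.

From mathcomp Require Import all_boot all_algebra.
Import GRing.Theory.
Local Open Scope ring_scope.
Set Implicit Arguments.
Unset Strict Implicit.

(* Every element s of some S in Den(R, a) is regular modulo a on both sides
   (s r \in a or r s \in a forces r \in a) and satisfies the left and right Ore
   conditions with witnesses in S.  Both properties are stable under products,
   so they hold on the semigroup generated by any union of members of
   Den(R, a).  Conversely, a multiplicatively closed set of such elements that
   contains one member S0 of Den(R, a) is itself in Den(R, a): regularity
   modulo a reduces every torsion condition and the computation of ass to the
   corresponding one for S0. *)

Section Generated.
Variable R : pzRingType.

Lemma gen_min (U T : rset R) : subset_of U T ->
  (forall x y, T x -> T y -> T (x * y)) -> subset_of (gen U) T.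
Proof. by move=> sUT mulT x; elim=> [y /sUT // | y z _ Ty _ Tz]; exact: mulT. Qed.

Lemma gen_sub (U V : rset R) : subset_of U (gen V) -> subset_of (gen U) (gen V).
Proof. by move=> sUV; apply: gen_min => //; exact: gen_mul. Qed.

Lemma gen_mono (U V : rset R) : subset_of U V -> subset_of (gen U) (gen V).
Proof. by move=> sUV; apply: gen_sub => x /sUV; exact: gen_base. Qed.

Lemma prodDenC (S1 S2 : rset R) : seteq (prodDen S1 S2) (prodDen S2 S1).
Proof. by move=> x; split; apply: gen_mono => y [Sy|Sy]; auto. Qed.

Lemma prodDenA (S1 S2 S3 : rset R) :
  seteq (prodDen (prodDen S1 S2) S3) (prodDen S1 (prodDen S2 S3)).
Proof.
move=> x; split; apply: gen_sub => y [Sy|Sy].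
- apply: gen_mono Sy => z [Sz|Sz]; first by left.
  by right; apply: gen_base; left.
- by apply: gen_base; right; apply: gen_base; right.
- by apply: gen_base; left; apply: gen_base; left.
- apply: gen_mono Sy => z [Sz|Sz]; last by right.
  by left; apply: gen_base; right.
Qed.

Lemma prodDenS (S1 S2 S3 : rset R) :
  subset_of S1 S2 -> subset_of (prodDen S1 S3) (prodDen S2 S3).
Proof. by move=> sS12; apply: gen_mono => y [/sS12|]; auto. Qed.

End Generated.

Section DenAss.
Variables (R : pzRingType) (a : rset R).

Definition lreg_mod (s : R) : Prop := forall r, a (s * r) -> a r.
Definition rreg_mod (s : R) : Prop := forall r, a (r * s) -> a r.
Definition lore_in (T : rset R) (s : R) : Prop :=
  forall r, exists s' r', T s' /\ s' * r = r' * s.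
Definition rore_in (T : rset R) (s : R) : Prop :=
  forall r, exists s' r', T s' /\ r * s' = s * r'.

Definition den_elt (T : rset R) (s : R) : Prop :=
  [/\ lreg_mod s, rreg_mod s, lore_in T s & rore_in T s].

Lemma den_elt_mono (T T' : rset R) s :
  subset_of T T' -> den_elt T s -> den_elt T' s.
Proof.
move=> sTT' [ls rs lo ro]; split=> // r.
  by have [s' [r' [/sTT' Ts' e]]] := lo r; exists s', r'.
by have [s' [r' [/sTT' Ts' e]]] := ro r; exists s', r'.
Qed.

Lemma den_eltM (T : rset R) x y : (forall u v, T u -> T v -> T (u * v)) ->
  den_elt T x -> den_elt T y -> den_elt T (x * y).
Proof.
move=> mulT [lx rx lox rox] [ly ry loy roy]; split.
- by move=> r; rewrite -mulrA => /lx /ly.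
- by move=> r; rewrite mulrA => /ry /rx.
- move=> r; have [s2 [r2 [Ts2 e2]]] := loy r.
  have [s1 [r1 [Ts1 e1]]] := lox r2.
  exists (s1 * s2), r1; split; first exact: mulT.
  by rewrite -mulrA e2 mulrA e1 mulrA.
- move=> r; have [s1 [r1 [Ts1 e1]]] := rox r.
  have [s2 [r2 [Ts2 e2]]] := roy r1.
  exists (s1 * s2), r2; split; first exact: mulT.
  by rewrite mulrA e1 -mulrA e2 mulrA.
Qed.

Lemma Den_a_den_elt (S : rset R) s : Den_a a S -> S s -> den_elt S s.
Proof.
move=> [[[[[_ _ mulS] lo] ltor] [[_ ro] _]] eqa] Ss; split.
- move=> r /eqa [t [St e]]; apply/eqa; exists (t * s).
  by split; [exact: mulS | rewrite -mulrA].
- move=> r /eqa [t [St e]]; rewrite mulrA in e.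
  have [u [Su e']] := ltor _ _ Ss e.
  by apply/eqa; exists (u * t); split; [exact: mulS | rewrite -mulrA].
- by move=> r; exact: lo.
- by move=> r; exact: ro.
Qed.

Lemma Den_a_of_den_elt (S0 T : rset R) : Den_a a S0 -> subset_of S0 T ->
  (forall x y, T x -> T y -> T (x * y)) -> (forall s, T s -> den_elt T s) ->
  Den_a a T.
Proof.
move=> D0 sS0T mulT denT.
move: D0 => [[[[[S01 S00 _] _] _] [_ rtor0]] eqa].
have a0 : a 0 by apply/eqa; exists 1; rewrite mulr0.
have Tn0 : ~ T 0.
  move=> /denT [l0 _ _ _]; have /eqa [s [S0s]] : a 1 by apply: l0; rewrite mul0r.
  by rewrite mulr1 => s0; rewrite s0 in S0s.
have mcT : mult_closed T by split=> //; exact: sS0T.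
split; [split; [split; [split|]|split; [split|]]|] => //.
- by move=> r s /denT [_ _ lo _].
- move=> r s /denT [_ rs _ _] rs0.
  have /eqa [t [S0t tr0]] : a r by apply: rs; rewrite rs0.
  by exists t; split=> //; exact: sS0T.
- by move=> r s /denT [_ _ _ ro].
- move=> r s /denT [ls _ _ _] sr0.
  have /eqa [t [S0t tr0]] : a r by apply: ls; rewrite sr0.
  have [u [S0u ru0]] := rtor0 _ _ S0t tr0.
  by exists u; split=> //; exact: sS0T.
- move=> r; split; last by move/eqa=> [s [S0s sr0]]; exists s; split=> //; exact: sS0T.
  by move=> [s [/denT [ls _ _ _] sr0]]; apply: ls; rewrite sr0.
Qed.

Lemma Den_a_gen (U : rset R) : (exists S, Den_a a S /\ subset_of S U) ->
  (forall x, U x -> exists S, [/\ Den_a a S, S x & subset_of S U]) ->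
  Den_a a (gen U).
Proof.
move=> [S0 [D0 sS0U]] coverU.
apply: (Den_a_of_den_elt D0) => [x /sS0U | |]; [exact: gen_base | exact: gen_mul|].
apply: gen_min => [x /coverU [S [DS Sx sSU]] | x y]; last exact: den_eltM (@gen_mul _ U).
apply: den_elt_mono (Den_a_den_elt DS Sx) => y /sSU; exact: gen_base.
Qed.

Lemma Den_a_prodDen (S1 S2 : rset R) :
  Den_a a S1 -> Den_a a S2 -> Den_a a (prodDen S1 S2).
Proof.
move=> D1 D2; apply: Den_a_gen; first by exists S1; split=> // x; left.
by move=> x [S1x|S2x]; [exists S1 | exists S2]; split=> // y; [left | right].
Qed.

Lemma Den_a_genFam (I : Type) (Sf : I -> rset R) : inhabited I ->
  (forall i, Den_a a (Sf i)) -> Den_a a (genFam Sf).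
Proof.
move=> [i0] D; apply: Den_a_gen; first by exists (Sf i0); split=> // x; exists i0.
by move=> x [i Sx]; exists (Sf i); split=> // y; exists i.
Qed.

Lemma Den_a_S_a : in_Ass a -> Den_a a (S_a a).
Proof.
move=> [S0 D0].
have cover x : S_a a x -> exists S, [/\ Den_a a S, S x & subset_of S (S_a a)].
  by move=> [S [DS Sx]]; exists S; split=> // y Sy; exists S.
have Dgen : Den_a a (gen (S_a a)).
  by apply: Den_a_gen cover; exists S0; split=> // x S0x; exists S0.
apply: (Den_a_of_den_elt D0) => [x S0x | x y Sx Sy | s /cover [S [DS Ss sS]]].
- by exists S0.
- by exists (gen (S_a a)); split=> //; apply: gen_mul; exact: gen_base.
- exact: den_elt_mono (Den_a_den_elt DS Ss).
Qed.

End DenAss.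

Theorem theorem4p1 (R : pzRingType) (a : rset R) (Ha : in_Ass a) :
  (* (1) *)
  (forall S1 S2 S3 : rset R, Den_a a S1 -> Den_a a S2 -> Den_a a S3 ->
     [/\ Den_a a (prodDen S1 S2),
         seteq (prodDen S1 S2) (prodDen S2 S1),
         seteq (prodDen (prodDen S1 S2) S3) (prodDen S1 (prodDen S2 S3))
       & subset_of S1 S2 -> subset_of (prodDen S1 S3) (prodDen S2 S3)]) /\
  (* (2) *)
  (Den_a a (S_a a) /\ (forall S, Den_a a S -> subset_of S (S_a a))) /\
  (* (3) *)
  (forall (I : Type) (Sf : I -> rset R), inhabited I ->
     (forall i, Den_a a (Sf i)) ->
     [/\ Den_a a (genFam Sf),
         (forall i, subset_of (Sf i) (genFam Sf))
       & forall T, Den_a a T -> (forall i, subset_of (Sf i) T) ->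
           subset_of (genFam Sf) T]).
Proof.
split.
  move=> S1 S2 S3 D1 D2 _; split.
  - exact: Den_a_prodDen.
  - exact: prodDenC.
  - exact: prodDenA.
  - exact: prodDenS.
split.
  by split; [exact: Den_a_S_a | move=> S DS x Sx; exists S].
move=> I Sf inhI D; split.
- exact: Den_a_genFam.
- by move=> i x Sx; apply: gen_base; exists i.
- move=> T [[[[[_ _ mulT] _] _] _] _] sST.
  by apply: gen_min => // x [i /sST].
Qed.
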